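(* Consider a common interest game and fix, for each $i$, parameters $\lambda^i\in[0,1]$, $\gamma^i,\kappa^i\in(0,1)$ and a stochastic kernel $h^i\in\mathcal{P}(\Pi^i\mid\Pi^i\times 2^{\Pi^i})$. Let $\{\bm{\pi}_k\}_{k\ge0}$ be the time-homogeneous Markov chain on $\bm{\Pi}$ generated by the Idealized Update Procedure (defined in the context), with transition matrix $A_{\bm{\gamma},\bm{\kappa},\mathbf{h}}$, where $\bm{\gamma}=(\gamma^i)_i$, $\bm{\kappa}=(\kappa^i)_i$, $\mathbf{h}=(h^i)_i$. Then this chain has a unique stationary distribution $\mu^*_{\bm{\gamma},\bm{\kappa},\mathbf{h}}$, and for every $\mu_0\in\mathcal{P}(\bm{\Pi})$, $\lim_{n\to\infty}\mu_0A^n_{\bm{\gamma},\bm{\kappa},\mathbf{h}}=\mu^*_{\bm{\gamma},\bm{\kappa},\mathbf{h}}$. Moreover, for every $\epsilon\in(0,1)$ and every $\bm{\kappa}\in(0,1)^N$ there exists $\bar{\gamma}_\epsilon(\bm{\kappa})>0$ such that, if $\gamma^i\in(0,\bar{\gamma}_\epsilon(\bm{\kappa}))$ for all $i$ (and for every choice of $\lambda^i$ and $h^i$), then \[ \mu^*_{\bm{\gamma},\bm{\kappa},\mathbf{h}}(\bm{\Pi}_{\rm opt})\ge 1-\epsilon/2 . \]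
   Context: Game setup: a finite discounted stochastic game with $N$ decision makers, finite state set $\mathbb{X}$, finite action sets $\mathbb{U}^i$, discount factors $\beta^i\in(0,1)$, costs $c^i:\mathbb{X}\times\mathbb{U}\to\mathbb{R}$ ($\mathbb{U}=\times_i\mathbb{U}^i$), and transition kernel $P(\cdot\mid x,\mathbf{u})$. $\Pi^i$ is the (finite) set of maps $\mathbb{X}\to\mathbb{U}^i$, $\bm{\Pi}=\times_i\Pi^i$, $\bm{\Pi}^{-i}=\times_{j\neq i}\Pi^j$, $\bm{\pi}=(\pi^i,\bm{\pi}^{-i})$. $J^i_x(\bm{\pi})=E[\sum_{t\ge0}(\beta^i)^tc^i(x_t,\bm{\pi}(x_t))\mid x_0=x]$ with $x_{t+1}\sim P(\cdot\mid x_t,\bm{\pi}(x_t))$. $\pi^i\in\Pi^i$ is a best reply to $\bm{\pi}^{-i}$ if $J^i_x(\pi^i,\bm{\pi}^{-i})=\min_{\sigma^i\in\Pi^i}J^i_x(\sigma^i,\bm{\pi}^{-i})$ for all $x$; $\mathrm{BR}^i(\bm{\pi}^{-i})\subseteq\Pi^i$ denotes the (nonempty) set of best replies. $\bm{\Pi}_{\rm opt}=\{\bm{\pi}^*:J^i_x(\bm{\pi}^* )=\inf_{\bm{\pi}\in\bm{\Pi}}J^i_x(\bm{\pi})\ \forall i,x\}$. Common interest game: $\bm{\Pi}_{\rm opt}\ne\emptyset$ and for all $\tilde{\bm{\pi}}\notin\bm{\Pi}_{\rm opt}$ and all $i$, $\inf_{\bm{\pi}}\sum_xJ^i_x(\bm{\pi})<\sum_xJ^i_x(\tilde{\bm{\pi}})$.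 Inertial best reply kernel: for $\lambda\in[0,1]$, $R^{i,\lambda}(\tilde\pi^i\mid\pi^i,B^i)$ equals $1$ if $\pi^i\in B^i$ and $\tilde\pi^i=\pi^i$; $\lambda$ if $\pi^i\notin B^i$ and $\tilde\pi^i=\pi^i$; $(1-\lambda)/|B^i|$ if $\pi^i\notin B^i$ and $\tilde\pi^i\in B^i$; $0$ otherwise ($\pi^i,\tilde\pi^i\in\Pi^i$, $B^i\subseteq\Pi^i$). $\mathcal{P}(\Pi^i\mid\Pi^i\times2^{\Pi^i})$ is the set of stochastic kernels assigning a probability distribution on $\Pi^i$ to each pair $(\pi^i,B^i)$. $\mathrm{Unif}(\Pi^i)$ is the uniform distribution. Idealized Update Procedure (IUP): given $\bm{\pi}_k$, the DMs choose $\pi^i_{{k+1}}$ conditionally independently: if $\bm{\pi}_k\in\bm{\Pi}_{\rm opt}$, $\pi^i_{k+1}\sim(1-\gamma^i)R^{i,\lambda^i}(\cdot\mid\pi^i_k,\mathrm{BR}^i(\bm{\pi}^{-i}_k))+\gamma^i\,\mathrm{Unif}(\Pi^i)$; if $\bm{\pi}_k\notin\bm{\Pi}_{\rm opt}$, $\pi^i_{k+1}\sim(1-\kappa^i)h^i(\cdot\mid\pi^i_k,\mathrm{BR}^i(\bm{\pi}^{-i}_k))+\kappa^i\,\mathrm{Unif}(\Pi^i)$. *)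

From Stdlib Require Import Reals ClassicalEpsilon.
From mathcomp Require Import all_boot.
Set Implicit Arguments. Unset Strict Implicit. Unset Printing Implicit Defensive.

Local Open Scope R_scope.

Definition rsum (T : finType) (f : T -> R) : R := \big[Rplus/0]_(t : T) f t.

Definition Rleb (a b : R) : bool := if Rle_dec a b then true else false.

Unset Implicit Arguments.
Record game := Game {
  nP : nat;
  X : finType;
  U : 'I_nP -> finType;
  beta : 'I_nP -> R;
  JA := {dffun forall j : 'I_nP, U j};
  cost : 'I_nP -> X -> JA -> R;
  P : X -> JA -> X -> R                          (* P(y | x, u) *)
}.

Set Implicit Arguments.

Definition valid_game (G : game) : Prop :=
  (forall i, 0 < beta G i < 1) /\
  (forall i, 0 < #|U G i|)%N /\
  (forall x u y, 0 <= P G x u y) /\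
  (forall x u, rsum (fun y => P G x u y) = 1).

Section GameDefs.
Variable G : game.

Definition Pol (i : 'I_(nP G)) := {ffun X G -> U G i}.
Definition Prof := {dffun forall i : 'I_(nP G), Pol i}.

Definition ja (pi : Prof) (x : X G) : JA G := [ffun j => pi j x].

Definition upd (pi : Prof) (i : 'I_(nP G)) (s : Pol i) : Prof :=
  [ffun j => dfwith (fun k => pi k) s j].

Fixpoint pt (pi : Prof) (x : X G) (t : nat) (y : X G) : R :=
  match t with
  | O => if y == x then 1 else 0
  | S t' => rsum (fun z => pt pi x t' z * P G z (ja pi z) y)
  end.

Definition Ecost (i : 'I_(nP G)) (pi : Prof) (x : X G) (t : nat) : R :=
  rsum (fun y => pt pi x t y * cost G i y (ja pi y)).

Definition J (i : 'I_(nP G)) (pi : Prof) (x : X G) : R :=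
  epsilon (inhabits 0)
    (fun l => infinite_sum (fun t => (beta G i) ^ t * Ecost i pi x t) l).

Definition BR (pi : Prof) (i : 'I_(nP G)) : {set Pol i} :=
  [set s | [forall x, [forall sg : Pol i,
             Rleb (J i (upd pi s) x) (J i (upd pi sg) x)]]].

(* pi* in Pi_opt : J^i_x(pi* ) = inf_pi J^i_x(pi) for all i, x
   (inf over the finite set Pi is a min) *)
Definition opt (pis : Prof) : bool :=
  [forall i, [forall x, [forall pi : Prof, Rleb (J i pis x) (J i pi x)]]].

Definition common_interest : Prop :=
  (exists pis, opt pis) /\
  forall pt' : Prof, ~~ opt pt' -> forall i,
    exists pi : Prof, rsum (fun x => J i pi x) < rsum (fun x => J i pt' x).

Definition kernel (i : 'I_(nP G)) (h : Pol i -> {set Pol i} -> Pol i -> R) : Prop :=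
  (forall p B q, 0 <= h p B q) /\ (forall p B, rsum (fun q => h p B q) = 1).

Definition Rin (i : 'I_(nP G)) (lam : R) (p : Pol i) (B : {set Pol i}) (q : Pol i) : R :=
  if p \in B then (if q == p then 1 else 0)
  else if q == p then lam
  else if q \in B then (1 - lam) / INR #|B|
  else 0.

Definition unif (i : 'I_(nP G)) (q : Pol i) : R := 1 / INR #|{: Pol i}|.

Definition A (lam gam kap : 'I_(nP G) -> R)
  (h : forall i, Pol i -> {set Pol i} -> Pol i -> R) (pi pi' : Prof) : R :=
  \big[Rmult/1]_(i : 'I_(nP G))
    (if opt pi then
       (1 - gam i) * Rin (lam i) (pi i) (BR pi i) (pi' i) + gam i * unif (pi' i)
     else
       (1 - kap i) * h i (pi i) (BR pi i) (pi' i) + kap i * unif (pi' i)).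

Definition distr (mu : Prof -> R) : Prop :=
  (forall pi, 0 <= mu pi) /\ rsum mu = 1.

Definition mulA (M : Prof -> Prof -> R) (mu : Prof -> R) (pi' : Prof) : R :=
  rsum (fun pi => mu pi * M pi pi').

Fixpoint iterA (M : Prof -> Prof -> R) (mu : Prof -> R) (n : nat) : Prof -> R :=
  match n with O => mu | S n' => mulA M (iterA M mu n') end.

Definition stationary (M : Prof -> Prof -> R) (mu : Prof -> R) : Prop :=
  distr mu /\ forall pi, mulA M mu pi = mu pi.

Definition mass_opt (mu : Prof -> R) : R := rsum (fun pi => if opt pi then mu pi else 0).

End GameDefs.

(* Every entry of the IUP transition matrix is at least
   [prod_i min (gam i) (kap i) / |Pi^i|] (all players explore and land on the target
   profile), so Doeblin's condition holds: the chain contracts in l1 on signed measures of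
   mass 0, which gives a unique stationary law attracting every initial law.
   For the mass of [Pi_opt], balance the stationary flows across [Pi_opt]. From an
   optimal profile nobody switches unless some player explores, so the chain leaves
   [Pi_opt] with probability at most [sum_i gam i]; from any other profile it enters
   [Pi_opt] with probability at least [c = prod_i kap i / |Pi^i|] by jumping onto a fixed
   optimal profile. Hence [c mu*(Pi_opt^c) <= sum_i gam i], and [c] does not depend on
   [gam]. *)
From Stdlib Require Import Reals Lra Lia.
From HB Require Import structures.
From mathcomp Require Import all_boot.
Local Open Scope R_scope.

HB.instance Definition _ := Monoid.isComLaw.Build R 0 Rplus
  (fun x y z => esym (Rplus_assoc x y z)) Rplus_comm Rplus_0_l.
HB.instance Definition _ := Monoid.isComLaw.Build R 1 Rmult
  (fun x y z => esym (Rmult_assoc x y z)) Rmult_comm Rmult_1_l.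
HB.instance Definition _ := Monoid.isMulLaw.Build R 0 Rmult Rmult_0_l Rmult_0_r.
HB.instance Definition _ :=
  Monoid.isAddLaw.Build R Rmult Rplus Rmult_plus_distr_r Rmult_plus_distr_l.

Section RealSums.
Context {T : finType}.
Implicit Types (f g : T -> R) (c : R).

Lemma eq_rsum f g : (forall x, f x = g x) -> rsum f = rsum g.
Proof. by move=> fg; apply: eq_bigr. Qed.

Lemma ler_rsum f g : (forall x, f x <= g x) -> rsum f <= rsum g.
Proof.
move=> fg; rewrite /rsum; elim/big_rec2: _ => [|x a b _ ab]; [lra | have := fg x; lra].
Qed.

Lemma rsum_ge0 f : (forall x, 0 <= f x) -> 0 <= rsum f.
Proof. move=> f0; rewrite /rsum; elim/big_rec: _ => [|x a _ a0]; [lra | have := f0 x; lra]. Qed.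

Lemma Rabs_rsum_le f : Rabs (rsum f) <= rsum (fun x => Rabs (f x)).
Proof.
rewrite /rsum; elim/big_rec2: _ => [|x a b _ ab]; first by rewrite Rabs_R0; lra.
by have := Rabs_triang (f x) b; lra.
Qed.

Lemma rsumD f g : rsum (fun x => f x + g x) = rsum f + rsum g.
Proof. exact: big_split. Qed.

Lemma rsumB f g : rsum (fun x => f x - g x) = rsum f - rsum g.
Proof. by rewrite /rsum; elim/big_rec3: _ => [|x a b e _ ->]; lra. Qed.

Lemma rsumMl c f : rsum (fun x => c * f x) = c * rsum f.
Proof. by rewrite /rsum big_distrr. Qed.

Lemma rsumMr c f : rsum (fun x => f x * c) = rsum f * c.
Proof. by rewrite /rsum big_distrl. Qed.

Lemma rsum_const c : rsum (fun _ : T => c) = INR #|T| * c.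
Proof.
rewrite /rsum big_const; elim: #|T| => [|n IHn] /=; first lra.
rewrite IHn; case: n {IHn} => [|n] /=; lra.
Qed.

Lemma rsum_ge_term f x0 : (forall x, 0 <= f x) -> f x0 <= rsum f.
Proof.
move=> f0; rewrite /rsum (bigD1 x0) //=.
suff : 0 <= \big[Rplus/0]_(x | x != x0) f x by lra.
by elim/big_rec: _ => [|x a _ a0]; [lra | have := f0 x; lra].
Qed.

Lemma rsumID (p : pred T) f :
  rsum f = rsum (fun x => if p x then f x else 0) + rsum (fun x => if p x then 0 else f x).
Proof. by rewrite -rsumD; apply: eq_rsum => x; case: (p x); lra. Qed.

Lemma cvg_rsum (u : nat -> T -> R) (l : T -> R) :
  (forall x, Un_cv (fun n => u n x) (l x)) -> Un_cv (fun n => rsum (u n)) (rsum l).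
Proof.
move=> ul; rewrite /rsum; elim: (index_enum T) => [|x s IHs].
  rewrite big_nil; apply: (Un_cv_ext (fun _ => 0)) => [n|]; first by rewrite big_nil.
  by move=> e e0; exists O => n _; rewrite /R_dist Rminus_0_r Rabs_R0.
rewrite big_cons; apply: (Un_cv_ext (fun n => u n x + \big[Rplus/0]_(y <- s) u n y)).
  by move=> n; rewrite big_cons.
exact: CV_plus.
Qed.

End RealSums.

Lemma exchange_rsum {T1 T2 : finType} (F : T1 -> T2 -> R) :
  rsum (fun y => rsum (fun x => F x y)) = rsum (fun x => rsum (fun y => F x y)).
Proof. exact: exchange_big. Qed.

Lemma rsum_dffun_prod {I : finType} {T_ : I -> finType} (F : forall i, T_ i -> R) :
  rsum (fun t : {dffun forall i, T_ i} => \big[Rmult/1]_i F i (t i)) =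
  \big[Rmult/1]_i rsum (F i).
Proof.
pose P_ i := [ffun j : T_ i => F i j].
rewrite /rsum; under [RHS]eq_bigr => i _ do rewrite (big_tag F i).
rewrite bigA_distr_big_dep.
transitivity (\big[Rplus/0]_(g in family (tagged_with T_))
     \big[Rmult/1]_i untag 0 (P_ i) (g i)); last first.
  apply: eq_bigr => g _; apply: eq_bigr => i _.
  by rewrite /untag; case: eqP => // e; rewrite ffunE.
rewrite -(@big_fprod _ _ 1 _ _ _ _ P_).
rewrite (reindex (@dffun_of_fprod I T_)); last exact/onW_bij/dffun_of_fprod_bij.
by apply: eq_bigr => t _; apply: eq_bigr => i _; rewrite /P_ ffunE /dffun_of_fprod ffunE.
Qed.

Section RealProducts.
Context {I : finType}.
Implicit Types f g : I -> R.

Lemma prod_gt0 f : (forall i, 0 < f i) -> 0 < \big[Rmult/1]_i f i.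
Proof. move=> f0; elim/big_rec: _ => [|i a _ a0]; [lra | have := f0 i; nra]. Qed.

Lemma ler_prod f g : (forall i, 0 <= f i <= g i) ->
  \big[Rmult/1]_i f i <= \big[Rmult/1]_i g i.
Proof.
move=> fg; suff [] : 0 <= \big[Rmult/1]_i f i <= \big[Rmult/1]_i g i by [].
elim/big_rec2: _ => [|i a b _ [a0 ab]]; first lra.
by have [f0 fgi] := fg i; split; [nra | apply: Rmult_le_compat].
Qed.

Lemma prod_one_minus_ge g : (forall i, 0 <= g i <= 1) ->
  1 - rsum g <= \big[Rmult/1]_i (1 - g i).
Proof.
move=> g01; suff [] : 0 <= rsum g /\ 1 - rsum g <= \big[Rmult/1]_i (1 - g i) by [].
rewrite /rsum; elim/big_rec2: _ => [|i a b _ [a0 ab]]; first lra.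
by have := g01 i; split; nra.
Qed.

End RealProducts.

Lemma geometric_eventually_lt r C e : 0 <= r < 1 -> 0 < C -> 0 < e ->
  exists N, forall n, (n >= N)%coq_nat -> C * r ^ n < e.
Proof.
move=> r01 C0 e0.
have r1 : Rabs r < 1 by rewrite Rabs_right; lra.
have [N rN] := pow_lt_1_zero r r1 (e / C) (Rdiv_lt_0_compat _ _ e0 C0).
exists N => n /rN; rewrite Rabs_right; last by apply: Rle_ge; apply: pow_le; lra.
move=> rn; apply: (Rmult_lt_reg_l (/ C)); first exact: Rinv_0_lt_compat.
by rewrite -Rmult_assoc Rinv_l; [rewrite Rmult_1_l Rmult_comm | lra].
Qed.

Lemma rsum_le_of_le_div_card {I : finType} (g : I -> R) k : 0 < k ->
  (forall i, g i <= k / (INR #|I| + 1)) -> rsum g <= k.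
Proof.
move=> k0 gk; apply: Rle_trans (ler_rsum _ _ gk) _; rewrite rsum_const.
have N0 := pos_INR #|I|.
have -> : INR #|I| * (k / (INR #|I| + 1)) = k - k / (INR #|I| + 1) by field; lra.
have : 0 < k / (INR #|I| + 1) by apply: Rdiv_lt_0_compat; lra.
lra.
Qed.

Section Doeblin.
Context {T : finType}.
Implicit Types f g mu nu : T -> R.

(* [pmf], [step] and [iter n step] are the game's [distr], [mulA] and [iterA] on an
   arbitrary finite state space. *)
Definition pmf mu := (forall x, 0 <= mu x) /\ rsum mu = 1.

Definition l1norm f := rsum (fun x => Rabs (f x)).

Variable M : T -> T -> R.

Definition step mu y := rsum (fun x => mu x * M x y).

Variables (d : R) (x0 : T).
Hypothesis d_gt0 : 0 < d.
Hypothesis M_ge : forall x y, d <= M x y.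
Hypothesis rsum_M : forall x, rsum (M x) = 1.

(* Each row of [M] carries mass [#|T| d] spread uniformly; this part cancels on signed
   measures of total mass 0, so [step] contracts them in l1 by the factor [rho]. *)
Let rho := 1 - INR #|T| * d.

Lemma pmf_row x : pmf (M x).
Proof. by split=> [y|]; [have := M_ge x y; lra | apply: rsum_M]. Qed.

Let rho_ge0 : 0 <= rho.
Proof.
suff : INR #|T| * d <= 1 by rewrite /rho; lra.
by rewrite -(rsum_M x0) -rsum_const; apply: ler_rsum; apply: M_ge.
Qed.

Let rho_lt1 : rho < 1.
Proof.
have card_ge1 : 1 <= INR #|T| by apply: (le_INR 1); apply/leP/card_gt0P; exists x0.
by rewrite /rho; nra.
Qed.

Lemma rsum_step f : rsum (step f) = rsum f.
Proof.
rewrite /step exchange_rsum; apply: eq_rsum => x.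
by rewrite rsumMl rsum_M Rmult_1_r.
Qed.

Lemma rsum_iter_step n f : rsum (iter n step f) = rsum f.
Proof. by elim: n => //= n IHn; rewrite rsum_step. Qed.

Lemma stepB f g y : step f y - step g y = step (fun x => f x - g x) y.
Proof. by rewrite /step -rsumB; apply: eq_rsum => x; ring. Qed.

Lemma l1norm_step_le f : rsum f = 0 -> l1norm (step f) <= rho * l1norm f.
Proof.
move=> f0.
have stepE y : step f y = rsum (fun x => f x * (M x y - d)).
  rewrite /step; under [RHS]eq_rsum => x do rewrite Rmult_minus_distr_l.
  by rewrite rsumB rsumMr f0; lra.
apply: (@Rle_trans _ (rsum (fun y => rsum (fun x => Rabs (f x) * (M x y - d))))).
  apply: ler_rsum => y; rewrite stepE; apply: Rle_trans _ _ _ (Rabs_rsum_le _) _.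
  apply: ler_rsum => x; rewrite Rabs_mult (Rabs_right (M x y - d)); first lra.
  by have := M_ge x y; lra.
rewrite exchange_rsum /l1norm -rsumMl; apply: ler_rsum => x.
by rewrite rsumMl rsumB rsum_const rsum_M /rho Rmult_comm; apply: Rle_refl.
Qed.

Lemma pmf_iter_step n mu : pmf mu -> pmf (iter n step mu).
Proof.
case=> mu0 mu1; split; last by rewrite rsum_iter_step.
elim: n => //= n IHn y; apply: rsum_ge0 => x.
by apply: Rmult_le_pos; [apply: IHn | have := M_ge x y; lra].
Qed.

Lemma l1norm_iter_stepB n f g : rsum f = rsum g ->
  l1norm (fun y => iter n step f y - iter n step g y) <=
  rho ^ n * l1norm (fun y => f y - g y).
Proof.
move=> fg; elim: n => [|n IHn] /=; first by rewrite Rmult_1_l; lra.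
have -> : l1norm (fun y => step (iter n step f) y - step (iter n step g) y) =
          l1norm (step (fun x => iter n step f x - iter n step g x)).
  by apply: eq_rsum => y; rewrite stepB.
apply: Rle_trans _ _ _ (l1norm_step_le _ _) _.
  by rewrite rsumB !rsum_iter_step fg; lra.
have : 0 <= l1norm (fun x => iter n step f x - iter n step g x).
  by apply: rsum_ge0 => x; apply: Rabs_pos.
by rewrite /l1norm in IHn *; nra.
Qed.

Lemma iter_step_dist n mu nu y : pmf mu -> pmf nu ->
  Rabs (iter n step mu y - iter n step nu y) <= 2 * rho ^ n.
Proof.
move=> [mu0 mu1] [nu0 nu1].
pose D y := iter n step mu y - iter n step nu y.
apply: (@Rle_trans _ (l1norm D)).
  by apply: (rsum_ge_term (fun y => Rabs (D y)) y) => x; apply: Rabs_pos.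
apply: Rle_trans _ _ _ (l1norm_iter_stepB _ _ _ _) _; first lra.
have : l1norm (fun y => mu y - nu y) <= 2.
  apply: Rle_trans (_ : rsum (fun y => mu y + nu y) <= 2); last by rewrite rsumD; lra.
  by apply: ler_rsum => x; have := mu0 x; have := nu0 x => *; apply: Rabs_le; lra.
by have := pow_le rho n rho_ge0; nra.
Qed.

Lemma iter_step_fixed n mu y : (forall x, step mu x = mu x) -> iter n step mu y = mu y.
Proof.
move=> fix_mu; elim: n y => //= n IHn y; rewrite -fix_mu.
by apply: eq_rsum => x; rewrite IHn.
Qed.

Lemma geometric_cvg (u : nat -> R) l :
  (forall n, Rabs (u n - l) <= 2 * rho ^ n) -> Un_cv u l.
Proof.
move=> ul e e0; have [|N HN] := geometric_eventually_lt rho 2 e (conj rho_ge0 rho_lt1) _ e0; first lra.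
by exists N => n /HN; rewrite /R_dist; have := ul n; lra.
Qed.

Lemma cvg_iter_step_row : exists w, forall y, Un_cv (fun n => iter n step (M x0) y) (w y).
Proof.
have cauchy y : Cauchy_crit (fun n => iter n step (M x0) y).
  move=> e e0; have [|N HN] := geometric_eventually_lt rho 2 e (conj rho_ge0 rho_lt1) _ e0; first lra.
  have shift n k : Rabs (iter (k + n)%coq_nat step (M x0) y - iter n step (M x0) y) <= 2 * rho ^ n.
    by rewrite plusE addnC iterD; apply: iter_step_dist; [apply: pmf_iter_step |]; apply: pmf_row.
  exists N => n m nN mN; rewrite /R_dist.
  have [nm|mn] := Nat.le_ge_cases n m.
    have [k [-> _]] := Nat.le_exists_sub n m nm; rewrite Rabs_minus_sym.
    by have := shift n k; have := HN n nN; lra.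
  have [k [-> _]] := Nat.le_exists_sub m n mn.
  by have := shift m k; have := HN m mN; lra.
by exists (fun y => proj1_sig (R_complete _ (cauchy y))) => y; apply: proj2_sig.
Qed.

Theorem doeblin : exists w, pmf w /\ (forall y, step w y = w y) /\
  (forall nu, pmf nu -> (forall y, step nu y = nu y) -> forall y, nu y = w y) /\
  (forall mu, pmf mu -> forall y, Un_cv (fun n => iter n step mu y) (w y)).
Proof.
have M0 := pmf_row x0.
have [w cvg_w] := cvg_iter_step_row.
have const_cv c : Un_cv (fun _ => c) c.
  by move=> e e0; exists O => n _; rewrite /R_dist Rminus_diag Rabs_R0.
have w_pmf : pmf w.
  split=> [y|].
    apply: (Rle_cv_lim _ (const_cv 0) (cvg_w y)) => n.
    by case: (pmf_iter_step n _ M0) => + _; apply.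
  apply: (UL_sequence _ _ _ (cvg_rsum _ _ cvg_w)).
  apply: (Un_cv_ext (fun _ => 1)) (const_cv 1) => n.
  by case: (pmf_iter_step n _ M0).
have w_fixed y : step w y = w y.
  apply: (UL_sequence (fun n => iter n.+1 step (M x0) y)).
    apply: cvg_rsum => x; apply: CV_mult; [exact: cvg_w | exact: const_cv].
  by move=> e /(cvg_w y) [N HN]; exists N => n nN; apply: HN; lia.
have cvg_to_w mu : pmf mu -> forall y, Un_cv (fun n => iter n step mu y) (w y).
  move=> mu_pmf y; apply: geometric_cvg => n.
  by rewrite -(iter_step_fixed n w y w_fixed); apply: iter_step_dist.
exists w; split=> //; split=> //; split=> // nu nu_pmf nu_fixed y.
apply: (UL_sequence (fun n => iter n step nu y)); last exact: cvg_to_w.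
by apply: (Un_cv_ext (fun _ => nu y)) (const_cv _) => n; rewrite iter_step_fixed.
Qed.

End Doeblin.

Section StationaryMassBalance.
Context {T : finType}.
Variables (M : T -> T -> R) (O : pred T) (s c : R).
Hypothesis rsum_M : forall x, rsum (M x) = 1.
Hypothesis s_ge0 : 0 <= s.
Hypothesis exit_le : forall x, O x -> rsum (fun y => if O y then 0 else M x y) <= s.
Hypothesis entry_ge : forall x, ~~ O x -> c <= rsum (fun y => if O y then M x y else 0).

Lemma exit_le_one_minus_entry x : ~~ O x -> rsum (fun y => if O y then 0 else M x y) <= 1 - c.
Proof. by move=> /entry_ge; rewrite -(rsum_M x) (rsumID O (M x)); lra. Qed.

(* At stationarity the flow out of [O] equals the flow into [O], so the mass [q] outside
   [O] satisfies [c q <= s (1 - q)]. *)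
Lemma stationary_mass_outside_le mu : pmf mu -> (forall y, step M mu y = mu y) ->
  c * rsum (fun x => if O x then 0 else mu x) <= s.
Proof.
move=> [mu0 mu1] mu_fixed.
set q := rsum (fun x => if O x then 0 else mu x).
have q_flow : q = rsum (fun x => mu x * rsum (fun y => if O y then 0 else M x y)).
  transitivity (rsum (fun y => rsum (fun x => if O y then 0 else mu x * M x y))).
    apply: eq_rsum => y; rewrite -(mu_fixed y) /step.
    by case: (O y) => //; rewrite rsum_const; lra.
  rewrite exchange_rsum; apply: eq_rsum => x; rewrite -rsumMl.
  by apply: eq_rsum => y; case: (O y); lra.
set p := rsum (fun x => if O x then mu x else 0).
have pq1 : p + q = 1 by rewrite -mu1 (rsumID O mu).
have q_le : q <= s * p + (1 - c) * q.
  rewrite [X in X <= _]q_flow /p /q -!rsumMl -rsumD; apply: ler_rsum => x.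
  case Ox: (O x); rewrite ?Rmult_0_r ?Rplus_0_r ?Rplus_0_l Rmult_comm.
    by apply: Rmult_le_compat_r; [apply: mu0 | apply: exit_le].
  by apply: Rmult_le_compat_r; [apply: mu0 | apply: exit_le_one_minus_entry; rewrite Ox].
have : 0 <= p by apply: rsum_ge0 => x; case: (O x); [apply: mu0 | lra].
have : 0 <= q by apply: rsum_ge0 => x; case: (O x); [lra | apply: mu0].
nra.
Qed.

End StationaryMassBalance.

Lemma iterA_iter (G : game) (M : Prof G -> Prof G -> R) mu n :
  iterA M mu n = iter n (step M) mu.
Proof. by elim: n => //= n ->. Qed.

Section Policies.
Variable G : game.
Implicit Types (pi : Prof G) (i : 'I_(nP G)).

Lemma upd_id pi i : upd pi (pi i) = pi.
Proof. by apply/ffunP => j; rewrite ffunE; case: dfwithP. Qed.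

Lemma opt_BR pi i : opt pi -> pi i \in BR pi i.
Proof.
move/forallP/(_ i) => opt_i; rewrite inE; apply/forallP => x; apply/forallP => s.
by rewrite upd_id; move/forallP/(_ x)/forallP/(_ (upd pi s)): opt_i.
Qed.

Lemma Rin_ge0 i lam (p : Pol i) (B : {set Pol i}) q : 0 <= lam <= 1 -> 0 <= Rin lam p B q.
Proof.
move=> lam01; rewrite /Rin; case: (p \in B); first by case: (q == p); lra.
case: (q == p); first lra.
case qB: (q \in B); last lra.
have : 0 < INR #|B| by apply: lt_0_INR; apply/ltP/card_gt0P; exists q.
by move=> B0; apply: Rmult_le_pos; [lra | apply/Rlt_le/Rinv_0_lt_compat].
Qed.

Lemma rsum_Rin i lam (p : Pol i) (B : {set Pol i}) : p \in B -> rsum (Rin lam p B) = 1.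
Proof.
move=> pB; rewrite /rsum (bigD1 p) //= /Rin pB eqxx big1; first lra.
by move=> q /negbTE ->.
Qed.

Hypothesis HG : valid_game G.

Lemma card_Pol_gt0 i : 0 < INR #|{: Pol i}|.
Proof.
case: HG => _ [/(_ i)/card_gt0P [u _] _].
by apply: lt_0_INR; apply/ltP/card_gt0P; exists [ffun _ => u].
Qed.

Lemma unif_gt0 i (q : Pol i) : 0 < unif q.
Proof. by apply: Rdiv_lt_0_compat; [lra | apply: card_Pol_gt0]. Qed.

Lemma rsum_unif i : rsum (fun q : Pol i => unif q) = 1.
Proof.
rewrite rsum_const; change (INR #|{: Pol i}| * (1 / INR #|{: Pol i}|) = 1).
by have := card_Pol_gt0 i => ?; field; lra.
Qed.

(* chance that every player [i] explores, with probability [w i], onto a prescribed policy *)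
Definition explore_prob (w : 'I_(nP G) -> R) :=
  \big[Rmult/1]_i (w i * (1 / INR #|{: Pol i}|)).

Lemma explore_prob_gt0 w : (forall i, 0 < w i) -> 0 < explore_prob w.
Proof.
move=> w0; apply: prod_gt0 => i; apply: Rmult_lt_0_compat; first exact: w0.
by apply: Rdiv_lt_0_compat; [lra | apply: card_Pol_gt0].
Qed.

Lemma ler_explore_prob w w' : (forall i, 0 <= w i <= w' i) ->
  explore_prob w <= explore_prob w'.
Proof.
move=> ww'; apply: ler_prod => i; have := ww' i; have := card_Pol_gt0 i => *.
have : 0 < 1 / INR #|{: Pol i}| by apply: Rdiv_lt_0_compat; lra.
by split; nra.
Qed.

Section Transitions.
Variables (lam gam kap : 'I_(nP G) -> R) (h : forall i, Pol i -> {set Pol i} -> Pol i -> R).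
Hypothesis lam01 : forall i, 0 <= lam i <= 1.
Hypothesis gam01 : forall i, 0 < gam i < 1.
Hypothesis kap01 : forall i, 0 < kap i < 1.
Hypothesis h_kernel : forall i, kernel (h i).

Definition iup_factor pi i (q : Pol i) : R :=
  if opt pi then (1 - gam i) * Rin (lam i) (pi i) (BR pi i) q + gam i * unif q
  else (1 - kap i) * h i (pi i) (BR pi i) q + kap i * unif q.

Lemma rsum_A pi : rsum (A lam gam kap h pi) = 1.
Proof.
rewrite [LHS](rsum_dffun_prod (fun i q => iup_factor pi i q)) big1 // => i _.
rewrite /iup_factor; case opt_pi: (opt pi); rewrite rsumD 2!rsumMl rsum_unif.
  by rewrite rsum_Rin; [ring | apply: opt_BR].
by case: (h_kernel i) => _ ->; ring.
Qed.

Lemma iup_factor_ge pi i q :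
  (if opt pi then gam i else kap i) * unif q <= iup_factor pi i q.
Proof.
have := unif_gt0 _ q; have := gam01 i; have := kap01 i.
rewrite /iup_factor; case: (opt pi).
  by have := Rin_ge0 _ _ (pi i) (BR pi i) q (lam01 i); nra.
by case: (h_kernel i) => h0 _; have := h0 (pi i) (BR pi i) q; nra.
Qed.

Lemma A_ge_explore pi pi' :
  explore_prob (fun i => if opt pi then gam i else kap i) <= A lam gam kap h pi pi'.
Proof.
apply: ler_prod => i; split; last exact: iup_factor_ge.
apply: Rmult_le_pos; last by have := unif_gt0 _ (pi' i); rewrite /unif; lra.
by case: (opt pi); [have := gam01 i | have := kap01 i]; lra.
Qed.

Lemma A_ge_explore_min pi pi' :
  explore_prob (fun i => Rmin (gam i) (kap i)) <= A lam gam kap h pi pi'.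
Proof.
apply: Rle_trans (A_ge_explore pi pi'); apply: ler_explore_prob => i.
have := Rmin_glb_lt _ _ _ (proj1 (gam01 i)) (proj1 (kap01 i)).
by case: (opt pi); [have := Rmin_l (gam i) (kap i) | have := Rmin_r (gam i) (kap i)]; lra.
Qed.

Lemma A_diag_ge pi : opt pi -> \big[Rmult/1]_i (1 - gam i) <= A lam gam kap h pi pi.
Proof.
move=> opt_pi; apply: ler_prod => i; have := gam01 i; have := unif_gt0 _ (pi i) => *.
by rewrite /iup_factor opt_pi /Rin opt_BR // eqxx; split; nra.
Qed.

Lemma A_ge0 pi pi' : 0 <= A lam gam kap h pi pi'.
Proof.
apply: Rle_trans (A_ge_explore_min pi pi'); apply/Rlt_le/explore_prob_gt0 => i.
by apply: Rmin_glb_lt; [case: (gam01 i) | case: (kap01 i)].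
Qed.

Lemma exit_opt_le pi : opt pi ->
  rsum (fun pi' => if opt pi' then 0 else A lam gam kap h pi pi') <= rsum gam.
Proof.
move=> opt_pi.
have stay : A lam gam kap h pi pi <= rsum (fun pi' => if opt pi' then A lam gam kap h pi pi' else 0).
  have := rsum_ge_term (fun pi' => if opt pi' then A lam gam kap h pi pi' else 0) pi.
  by rewrite opt_pi; apply=> pi'; case: (opt pi'); [apply: A_ge0 | lra].
have diag := A_diag_ge pi opt_pi.
have weierstrass := prod_one_minus_ge gam (fun i => ltac:(have := gam01 i; lra)).
have total := rsum_A pi; rewrite (rsumID (@opt G) (A lam gam kap h pi)) in total.
(* these [set]s merge terms differing only in binder annotations, which [lra] would
   otherwise treat as distinct atoms *)
set stay_mass := rsum _ in stay total.
set exit_mass := rsum _ in total *.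
set prod_stay := \big[Rmult/1]_i _ in diag weierstrass.
lra.
Qed.

Lemma entry_opt_ge (pis : Prof G) pi : opt pis -> ~~ opt pi ->
  explore_prob kap <= rsum (fun pi' => if opt pi' then A lam gam kap h pi pi' else 0).
Proof.
move=> opt_pis /negbTE nopt_pi; have := A_ge_explore pi pis; rewrite nopt_pi => entry.
apply: Rle_trans entry _.
have := rsum_ge_term (fun pi' => if opt pi' then A lam gam kap h pi pi' else 0) pis.
by rewrite opt_pis; apply=> pi'; case: (opt pi'); [apply: A_ge0 | lra].
Qed.

Lemma stationary_mass_opt_ge (pis : Prof G) mus : opt pis ->
  stationary (A lam gam kap h) mus -> explore_prob kap * (1 - mass_opt mus) <= rsum gam.
Proof.
move=> opt_pis [mus_pmf mus_fixed].
have := stationary_mass_outside_le _ (@opt G) (rsum gam) (explore_prob kap) rsum_A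
  (rsum_ge0 _ (fun i => Rlt_le _ _ (proj1 (gam01 i)))) exit_opt_le
  (fun pi => entry_opt_ge pis pi opt_pis) mus mus_pmf mus_fixed.
have := proj2 mus_pmf; rewrite (rsumID (@opt G) mus) /mass_opt.
set q := rsum (fun pi => if opt pi then 0 else mus pi).
by set p := rsum _ => pq; rewrite -pq; lra.
Qed.

End Transitions.
End Policies.

Theorem lemma2 (G : game) (HG : valid_game G) (HCI : common_interest G) :
  (forall (lam gam kap : 'I_(nP G) -> R)
          (h : forall i, Pol i -> {set Pol i} -> Pol i -> R),
     (forall i, (0 <= lam i <= 1)) ->
     (forall i, (0 < gam i < 1)) ->
     (forall i, (0 < kap i < 1)) ->
     (forall i, kernel (h i)) ->
     exists mus : Prof G -> R,
       stationary (A lam gam kap h) mus /\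
       (forall nu, stationary (A lam gam kap h) nu -> forall pi, nu pi = mus pi) /\
       (forall mu0, distr mu0 -> forall pi,
          Un_cv (fun n => iterA (A lam gam kap h) mu0 n pi) (mus pi))) /\
  (forall (eps : R) (kap : 'I_(nP G) -> R),
     (0 < eps < 1) ->
     (forall i, (0 < kap i < 1)) ->
     exists gbar : R, (0 < gbar) /\
       forall (lam gam : 'I_(nP G) -> R)
              (h : forall i, Pol i -> {set Pol i} -> Pol i -> R),
         (forall i, (0 <= lam i <= 1)) ->
         (forall i, (0 < gam i < gbar)) ->
         (forall i, kernel (h i)) ->
         forall mus, stationary (A lam gam kap h) mus ->
           (1 - eps / 2 <= mass_opt mus)).
Proof.
have [[pis opt_pis] _] := HCI.
split.
  move=> lam gam kap h lam01 gam01 kap01 h_kernel.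
  have explore_gt0 : 0 < explore_prob G (fun i => Rmin (gam i) (kap i)).
    by apply: explore_prob_gt0 => // i; apply: Rmin_glb_lt; [case: (gam01 i) | case: (kap01 i)].
  have [w [w_pmf [w_fixed [w_unique cvg_w]]]] :=
    doeblin _ _ pis explore_gt0 (A_ge_explore_min _ HG _ _ _ _ lam01 gam01 kap01 h_kernel)
      (rsum_A _ HG _ _ _ _ h_kernel).
  exists w; split; first by split.
  split; first by move=> nu [nu_pmf nu_fixed]; apply: w_unique.
  by move=> mu0 mu0_pmf pi; apply: Un_cv_ext (cvg_w mu0 mu0_pmf pi) => n; rewrite iterA_iter.
move=> eps kap [eps0 _] kap01.
set c := explore_prob G kap.
have c_gt0 : 0 < c by apply: explore_prob_gt0 => // i; case: (kap01 i).
have eps_c_gt0 : 0 < c * eps / 2 by nra.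
set gam_bound := c * eps / 2 / (INR #|'I_(nP G)| + 1).
exists (Rmin gam_bound 1); split.
  apply: Rmin_glb_lt; last lra.
  by apply: Rdiv_lt_0_compat => //; have := pos_INR #|'I_(nP G)|; lra.
move=> lam gam h lam01 gam_lt h_kernel mus mus_stat.
have gam_le i : 0 < gam i <= gam_bound /\ gam i < 1.
  by have := gam_lt i; have := Rmin_l gam_bound 1; have := Rmin_r gam_bound 1; lra.
have gam01 i : 0 < gam i < 1 by have := gam_le i; lra.
have rsum_gam : rsum gam <= c * eps / 2.
  by apply: rsum_le_of_le_div_card eps_c_gt0 _ => i; case: (gam_le i) => -[].
have := stationary_mass_opt_ge _ HG _ _ _ _ lam01 gam01 kap01 h_kernel pis mus opt_pis mus_stat.
by rewrite -/c; nra.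
Qed.
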